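(* Let $w = 1+z$. Then, as formal power series in $x$ whose coefficients are polynomials in $z$, $$\sum_{n \ge 0} F_{n,n}(z)\, x^n \;=\; \frac{1}{\sqrt{(wx+1)^2 - 4w^2 x}}.$$ Here the square root is the formal power series in $x$ with constant term $1$.
   Context: Let $\mathbb{N} = \{0,1,2,\dots\}$. For $(p,q) \in \mathbb{N}^2$ and $n \in \mathbb{N}$, an unrestricted generalized jump path of length $n$ starting at $(p,q)$ is a sequence $(x_0, \dots, x_n)$ of points of $\mathbb{N}^2$ satisfying three conditions: - $x_0 = (p,q)$; - for every $i$, each coordinate of $x_{i+1}$ is at most the corresponding coordinate of $x_i$; - $x_{i+1} \ne x_i$ for every $i$. Let $u((p,q),n)$ denote the number of such paths, and define the polynomial $F_{p,q}(z) = \sum_{k=0}^{p+q} u((p,q),k)\, z^k$. *)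

From HB Require Import structures.
From mathcomp Require Import all_boot all_order all_algebra.
Set Implicit Arguments. Unset Strict Implicit. Unset Printing Implicit Defensive.
Import Order.TTheory GRing.Theory Num.Theory.
Local Open Scope ring_scope.

(* A path (x_0,...,x_n) starting at (p,q) with coordinatewise nonincreasing
   steps stays in the box [0,p] x [0,q]; we therefore encode its points in
   'I_p.+1 * 'I_q.+1 (this is a bijection with the paper's paths in N^2). *)
Definition pt_le (p q : nat) (y x : 'I_p.+1 * 'I_q.+1) : bool :=
  ((val y.1 <= val x.1)%N && (val y.2 <= val x.2)%N).

Definition is_jump_path (p q n : nat)
    (t : {ffun 'I_n.+1 -> 'I_p.+1 * 'I_q.+1}) : bool :=
  [&& val (t ord0).1 == p, val (t ord0).2 == q &
      [forall i : 'I_n,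
         let xi  := t (widen_ord (leqnSn n) i) in
         let xi1 := t (lift ord0 i) in
         pt_le xi1 xi && (xi1 != xi)]].

Definition u (p q n : nat) : nat := #|[pred t | @is_jump_path p q n t]|.

Definition Fpoly (p q : nat) : {poly int} :=
  \sum_(k < (p + q).+1) (u p q k)%:R *: 'X^k.

Definition ps (R : nzRingType) := nat -> R.
Definition ps_C (R : nzRingType) (c : R) : ps R := fun n => if n == 0%N then c else 0.
Definition ps_X (R : nzRingType) : ps R := fun n => if n == 1%N then 1 else 0.
Definition ps_add (R : nzRingType) (f g : ps R) : ps R := fun n => f n + g n.
Definition ps_sub (R : nzRingType) (f g : ps R) : ps R := fun n => f n - g n.
Definition ps_mul (R : nzRingType) (f g : ps R) : ps R :=
  fun n => \sum_(i < n.+1) f i * g (n - i)%N.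

(* G = 1 / sqrt(H), where sqrt(H) is the formal square root with constant
   term 1 (H must have constant term 1): G has constant term 1 and G^2 H = 1. *)
Definition is_inv_sqrt (R : nzRingType) (G H : ps R) : Prop :=
  G 0%N = 1 /\ ps_mul (ps_mul G G) H = ps_C 1.

From HB Require Import structures.
From mathcomp Require Import all_boot all_order all_algebra.
From mathcomp Require Import ring zify.
From Stdlib Require Import FunctionalExtensionality.
Import GRing.Theory Num.Theory.
Local Open Scope ring_scope.
Set Implicit Arguments. Unset Strict Implicit. Unset Printing Implicit Defensive.

(* Splitting off the first jump shows that the number npaths k a b
      of jump paths of length k from (a,b) satisfies
      npaths (k+1) (a,b) + npaths k (a,b) = sum of npaths k over the rectangle
      below (a,b).  In generating-function form, (1 + z) F_{a,b} = 1 + z times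
      the rectangle sum, and inclusion-exclusion on rectangles turns this into
      a local recurrence for F padded by zeros on the axes (Fpad_rec).
   2. Recurrence.  Any g on N^2, zero on the axes and satisfying this local
      recurrence, is symmetric and satisfies a first-order relation
      p g(p+1,q) - q g(p,q+1) = (p - q) g(p,q); combining them around the
      diagonal yields a three-term recurrence for a_n = g(n+1,n+1).
   3. Differential equation.  If a_0 = 1 and a satisfies that recurrence, the
      truncations A of sum a_n x^n satisfy (A^2 D)' = A (2 D A' + D' A) with
      2 D A' + D' A vanishing in low degrees; hence A^2 D = 1 up to the order
      of truncation, provided the coefficient ring has no additive torsion. *)

Section PathsInBox.
Variables p q : nat.
Local Notation T := ('I_p.+1 * 'I_q.+1)%type.

Definition jump (y x : T) : bool := pt_le y x && (y != x).

Definition descending n (t : {ffun 'I_n.+1 -> T}) : bool :=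
  [forall i : 'I_n, jump (t (lift ord0 i)) (t (widen_ord (leqnSn n) i))].

Definition paths_from n (x : T) : nat :=
  #|[pred t : {ffun 'I_n.+1 -> T} | (t ord0 == x) && descending t]|.

Definition behead_path n (t : {ffun 'I_n.+2 -> T}) : {ffun 'I_n.+1 -> T} :=
  [ffun j => t (lift ord0 j)].

Definition cons_path n (x : T) (s : {ffun 'I_n.+1 -> T}) : {ffun 'I_n.+2 -> T} :=
  [ffun i => if unlift ord0 i is Some j then s j else x].

Lemma cons_pathK n x : cancel (@cons_path n x) (@behead_path n).
Proof. by move=> s; apply/ffunP => j; rewrite !ffunE liftK. Qed.

Lemma cons_path0 n x (s : {ffun 'I_n.+1 -> T}) : cons_path x s ord0 = x.
Proof. by rewrite ffunE unlift_none. Qed.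

Lemma behead_pathK n (t : {ffun 'I_n.+2 -> T}) : cons_path (t ord0) (behead_path t) = t.
Proof. by apply/ffunP => i; rewrite ffunE; case: unliftP => [j ->|->]; rewrite ?ffunE. Qed.

Lemma descendingS n (t : {ffun 'I_n.+2 -> T}) :
  descending t = jump (behead_path t ord0) (t ord0) && descending (behead_path t).
Proof.
have wid0 : widen_ord (leqnSn n.+1) ord0 = ord0 by exact: val_inj.
have widS j : widen_ord (leqnSn n.+1) (lift ord0 j) = lift ord0 (widen_ord (leqnSn n) j).
  exact: val_inj.
apply/forallP/andP => [D|[D0 /forallP D] i].
  split; first by have := D ord0; rewrite wid0 ffunE.
  by apply/forallP => j; have := D (lift ord0 j); rewrite widS !ffunE.
case: (unliftP ord0 i) => [j ->|->]; last by move: D0; rewrite wid0 ffunE.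
by have := D j; rewrite widS !ffunE.
Qed.

Lemma paths_fromS n x : paths_from n.+1 x = \sum_(y | jump y x) paths_from n y.
Proof.
rewrite /paths_from -sum1_card (partition_big (fun t => behead_path t ord0) xpredT) //=.
rewrite (bigID (fun y => jump y x)) /= [X in (_ + X)%N]big1 ?addn0; last first.
  move=> y xy; rewrite big_pred0 // => t.
  apply/negP => /andP[/andP[/eqP t0]]; rewrite descendingS => /andP[ty _] /eqP t1.
  by move: xy; rewrite -t1 -t0 ty.
apply: eq_bigr => y xy; rewrite sum1_card.
rewrite -(card_imset _ (can_inj (@cons_pathK n x))); apply: eq_card => t.
rewrite unfold_in /= !inE; apply/idP/imsetP => [/andP[/andP[/eqP t0 Dt] /eqP t1]|[s]].
  exists (behead_path t); last by rewrite -t0 behead_pathK.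
  by rewrite inE t1 eqxx; move: Dt; rewrite descendingS => /andP[].
rewrite inE => /andP[/eqP s0 Ds] ->.
by rewrite cons_path0 eqxx descendingS cons_pathK s0 cons_path0 xy Ds eqxx.
Qed.

Lemma sum_below (f : nat -> nat -> nat) (x : T) :
  (\sum_(y | pt_le y x) f y.1 y.2 = \sum_(i < x.1.+1) \sum_(j < x.2.+1) f i j)%N.
Proof.
rewrite (big_ord_widen _ (fun i => \sum_(j < x.2.+1) f i j) (ltn_ord x.1)).
under [in RHS]eq_bigr => i _ do rewrite (big_ord_widen _ (f i) (ltn_ord x.2)).
by rewrite pair_big_dep; apply: eq_bigl => -[i j]; rewrite /pt_le /= !ltnS.
Qed.

(* Adding the paths that stay at x for one more step (the term y = x)
   turns the sum over jumps into a sum over the whole rectangle below x. *)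
Lemma paths_from_rec n x :
  (paths_from n.+1 x + paths_from n x = \sum_(y | pt_le y x) paths_from n y)%N.
Proof.
have le_xx : pt_le x x by rewrite /pt_le !leqnn.
rewrite paths_fromS [RHS](bigD1 (P := fun y => pt_le y x) x le_xx) /= addnC.
by congr (_ + _)%N; apply: eq_bigl => y; rewrite andbC.
Qed.
End PathsInBox.

(* Number of jump paths of length k from (a,b): the first jump goes either to
   some (i,j) with i < a, or to some (a,j) with j < b. *)
Fixpoint npaths (k a b : nat) : nat :=
  if k is k'.+1 then
    (\sum_(i < a) \sum_(j < b.+1) npaths k' i j + \sum_(j < b) npaths k' a j)%N
  else 1%N.

Lemma npaths_rec k a b :
  (npaths k.+1 a b + npaths k a b = \sum_(i < a.+1) \sum_(j < b.+1) npaths k i j)%N.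
Proof. by rewrite /= big_ord_recr /= big_ord_recr /= addnA. Qed.

(* Each jump lowers a + b, so there are no paths longer than a + b. *)
Lemma npaths_eq0 k a b : (a + b < k)%N -> npaths k a b = 0%N.
Proof.
elim: k a b => [//|k IH] a b abk /=.
rewrite big1 ?add0n => [|i _]; last first.
  by rewrite big1 // => j _; apply: IH; have := ltn_ord i; have := ltn_ord j; lia.
by rewrite big1 // => j _; apply: IH; have := ltn_ord j; lia.
Qed.

Lemma paths_from_npaths p q n (x : 'I_p.+1 * 'I_q.+1) :
  paths_from n x = npaths n x.1 x.2.
Proof.
elim: n x => [|n IH] x.
  rewrite /paths_from (eq_card (B := pred1 [ffun=> x])) ?card1 // => t.
  have Dt : descending t by apply/forallP => -[].
  rewrite !inE Dt andbT; apply/eqP/eqP => [<-|->]; last by rewrite ffunE.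
  by apply/ffunP => i; rewrite ffunE (ord1 i).
apply/eqP; rewrite -(eqn_add2r (paths_from n x)) paths_from_rec.
under eq_bigr do rewrite IH.
by rewrite sum_below IH npaths_rec.
Qed.

Lemma u_npaths p q k : u p q k = npaths k p q.
Proof.
rewrite /u -(paths_from_npaths k (ord_max, ord_max)).
apply: eq_card => t; rewrite !inE /is_jump_path /descending /jump.
by case: (t ord0) => i j; rewrite andbA xpair_eqE -!val_eqE.
Qed.

(* The truncation at degree p + q in the definition of F_{p,q} is harmless. *)
Lemma coef_Fpoly p q k : (Fpoly p q)`_k = (npaths k p q)%:R.
Proof.
have -> : Fpoly p q = \poly_(k < (p + q).+1) (u p q k)%:R by rewrite poly_def.
rewrite coef_poly u_npaths; case: ltnP => // pqk.
by rewrite npaths_eq0.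
Qed.

Lemma Fpoly_first_step a b :
  (1 + 'X) * Fpoly a b = 1 + 'X * \sum_(i < a.+1) \sum_(j < b.+1) Fpoly i j.
Proof.
apply/polyP => k; rewrite mulrDl mul1r coefD coef_Fpoly coefD coef1 !coefXM.
case: k => [|k] /=; first by rewrite addr0.
rewrite coef_Fpoly add0r -natrD npaths_rec natr_sum coef_sum.
by apply: eq_bigr => i _; rewrite coef_sum natr_sum; apply: eq_bigr => j _; rewrite coef_Fpoly.
Qed.

Lemma rect_sum_corner (V : zmodType) (f : nat -> nat -> V) m n :
  \sum_(i < m.+1) \sum_(j < n.+1) f i j - \sum_(i < m) \sum_(j < n.+1) f i j
  - \sum_(i < m.+1) \sum_(j < n) f i j + \sum_(i < m) \sum_(j < n) f i j = f m n.
Proof.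
rewrite !big_ord_recr /=.
set A := \sum_(i < m) _; set B := \sum_(i < n) _; set C := \sum_(i < m) _.
by rewrite (addrAC A) subrr add0r (addrC C) (addrC B) opprD addrA addrK subrK.
Qed.

Definition Fpad (p q : nat) : {poly int} :=
  if p is p'.+1 then (if q is q'.+1 then Fpoly p' q' else 0) else 0.

Lemma Fpad_first_step p q :
  'X * \sum_(i < p) \sum_(j < q) Fpoly i j = (1 + 'X) * Fpad p q - ((0 < p)%N && (0 < q)%N)%:R.
Proof.
case: p => [|p]; first by rewrite big_ord0 mulr0 mulr0 subr0.
case: q => [|q]; first by rewrite big1 ?mulr0 ?subr0 // => i _; rewrite big_ord0.
by rewrite Fpoly_first_step addrC addKr.
Qed.

(* Padded F satisfies one recurrence everywhere off the axes: combine the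
   first-step identity at the four corners of a unit square using
   inclusion-exclusion, and cancel X F from both sides using w = 1 + X. *)
Lemma Fpad_rec p q : Fpad p.+1 q.+1 =
  (1 + 'X) * (Fpad p q.+1 + Fpad p.+1 q - Fpad p q) + ((p == 0%N) && (q == 0%N))%:R.
Proof.
have XF : 'X * Fpad p.+1 q.+1 = 'X * Fpoly p q by [].
rewrite -(rect_sum_corner Fpoly p q) !(mulrDr, mulrBr, mulrN) !Fpad_first_step in XF.
transitivity ((1 + 'X) * Fpad p.+1 q.+1 - 'X * Fpad p.+1 q.+1); first by ring.
by rewrite XF; case: p {XF} => [|p]; case: q => [|q] /=; ring.
Qed.

Section PaddedRecurrence.
Variables (R : comNzRingType) (w : R) (g : nat -> nat -> R).
Hypothesis g_axis_l : forall q, g 0%N q = 0.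
Hypothesis g_axis_r : forall p, g p 0%N = 0.
Hypothesis g_rec : forall p q,
  g p.+1 q.+1 = w * (g p q.+1 + g p.+1 q - g p q) + ((p == 0%N) && (q == 0%N))%:R.

(* The recurrence is symmetric in p and q, hence so is its solution. *)
Lemma g_sym p q : g p q = g q p.
Proof.
elim: p q => [|p IHp] q; first by rewrite g_axis_l g_axis_r.
elim: q => [|q IHq]; first by rewrite g_axis_l g_axis_r.
by rewrite !g_rec (IHp q.+1) (IHp q) IHq andbC [g q.+1 p + _]addrC.
Qed.

Let defect p q := p%:R * g p.+1 q - q%:R * g p q.+1 - (p%:R - q%:R) * g p q.

(* The defect satisfies the same homogeneous recurrence, up to a source term
   that vanishes since it is supported at p = q = 0. *)
Lemma defect_rec p q : defect p.+1 q.+1 =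
  w * (defect p q.+1 + defect p.+1 q - defect p q)
  - (p%:R - q%:R) * ((p == 0%N) && (q == 0%N))%:R.
Proof.
rewrite /defect (g_rec p.+1 q) (g_rec p q.+1) (g_rec p q) !andbF !addr0.
ring.
Qed.

Lemma g_holonomic p q : p%:R * g p.+1 q - q%:R * g p q.+1 = (p%:R - q%:R) * g p q.
Proof.
apply/eqP; rewrite -subr_eq0 -/(defect p q); apply/eqP.
elim: p q => [|p IHp] q; first by rewrite /defect !g_axis_l; ring.
elim: q => [|q IHq]; first by rewrite /defect !g_axis_r; ring.
rewrite defect_rec IHq !IHp.
by case: p {IHp IHq} => [|p]; case: q => [|q]; rewrite ?subrr /=; ring.
Qed.

Lemma g11 : g 1 1 = 1.
Proof. by rewrite g_rec !g_axis_l g_axis_r eqxx /=; ring. Qed.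

(* The diagonal a_k = g(k+1,k+1) satisfies a three-term recurrence: it is
   obtained from the recurrence and the first-order relation around the
   diagonal, using the symmetry of g. *)
Lemma g_diag_rec m : let a k := g k.+1 k.+1 in
  m.+1%:R * a m.+1 + (2 * m + 1)%:R * (w - 2%:R * w ^+ 2) * a m
  + m%:R * w ^+ 2 * a m.-1 = 0.
Proof.
move=> a; case: m => [|n] /=.
  by rewrite /a g_rec (g_sym 1 2) g11 g_rec g11 !g_axis_r /=; ring.
have e1 : a n.+1 - w * (2%:R * g n.+2 n.+1 - a n) = 0.
  by rewrite /a g_rec (g_sym n.+1 n.+2) /=; ring.
have e2 : n.+2%:R * g n.+3 n.+1 - n.+1%:R * a n.+1 - g n.+2 n.+1 = 0.
  by have := g_holonomic n.+2 n.+1; rewrite /a => ->; ring.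
have e3 : g n.+3 n.+2 - w * (a n.+1 + g n.+3 n.+1 - g n.+2 n.+1) = 0.
  by rewrite /a g_rec /=; ring.
have e4 : a n.+2 - w * (2%:R * g n.+3 n.+2 - a n.+1) = 0.
  by rewrite /a g_rec (g_sym n.+2 n.+3) /=; ring.
rewrite -[RHS](_ : n.+2%:R * 0 + 2%:R * w * n.+2%:R * 0 + 2%:R * w ^+ 2 * 0
  + n.+1%:R * w * 0 = 0); last by ring.
rewrite -{1}e4 -{1}e3 -{1}e2 -{1}e1 /a; ring.
Qed.
End PaddedRecurrence.

Section PowerSeriesOfPolynomials.
Variable R : nzRingType.

Definition ps_of (p : {poly R}) : ps R := fun i => p`_i.

Lemma ps_CE (c : R) : ps_C c = ps_of c%:P.
Proof. by apply: functional_extensionality => i; rewrite /ps_of coefC. Qed.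

Lemma ps_XE : ps_X R = ps_of 'X.
Proof. by apply: functional_extensionality => i; rewrite /ps_of coefX /ps_X; case: eqP. Qed.

Lemma ps_addE (p r : {poly R}) : ps_add (ps_of p) (ps_of r) = ps_of (p + r).
Proof. by apply: functional_extensionality => i; rewrite /ps_of coefD. Qed.

Lemma ps_subE (p r : {poly R}) : ps_sub (ps_of p) (ps_of r) = ps_of (p - r).
Proof. by apply: functional_extensionality => i; rewrite /ps_of coefB. Qed.

Lemma ps_mul_trunc (f g : ps R) (p r : {poly R}) n :
  (forall i, (i <= n)%N -> f i = p`_i) -> (forall i, (i <= n)%N -> g i = r`_i) ->
  ps_mul f g n = (p * r)`_n.
Proof.
move=> fp gr; rewrite /ps_mul coefM; apply: eq_bigr => i _.
by rewrite fp ?gr ?leq_subr // -ltnS.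
Qed.

Lemma ps_mulE (p r : {poly R}) : ps_mul (ps_of p) (ps_of r) = ps_of (p * r).
Proof. by apply: functional_extensionality => n; exact: ps_mul_trunc. Qed.

End PowerSeriesOfPolynomials.

Lemma coef_Xderiv (R : nzRingType) (p : {poly R}) m : ('X * p^`())`_m = p`_m *+ m.
Proof. by rewrite coefXM; case: m => [|m] /=; rewrite ?mulr0n // coef_deriv. Qed.

(* The recurrence says that
   A = sum a_n x^n solves the linear differential equation 2 D A' + D' A = 0,
   i.e. (A^2 D)' = 0; we argue with the polynomial truncations of A. *)
Section DiagonalODE.
Variable R : comNzRingType.
Hypothesis R_torsion_free : forall (x : R) n, x *+ n.+1 = 0 -> x = 0.
Variables (w : R) (a : nat -> R).
Let c : R := w - 2%:R * w ^+ 2.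
Hypothesis a0 : a 0%N = 1.
Hypothesis a_rec : forall m,
  m.+1%:R * a m.+1 + (2 * m + 1)%:R * c * a m + m%:R * w ^+ 2 * a m.-1 = 0.

Let Dpoly : {poly R} := (w%:P * 'X + 1) ^+ 2 - (4%:R * w ^+ 2)%:P * 'X.
Let A N : {poly R} := \poly_(i < N.+1) a i.

Lemma coefA N i : (i <= N)%N -> (A N)`_i = a i.
Proof. by move=> iN; rewrite coef_poly ltnS iN. Qed.

Lemma DpolyE : Dpoly = 1 + (c *+ 2)%:P * 'X + (w ^+ 2)%:P * 'X ^+ 2.
Proof.
by rewrite /Dpoly /c !(rmorphB, rmorphD, rmorphM, rmorphMn, rmorphXn) /= ?rmorph_nat; ring.
Qed.

(* E N = 2 D A' + D' A, in a form whose coefficients are easy to read off: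
   the m-th one is twice the recurrence at m. *)
Let E N : {poly R} :=
  ((A N)^`() + c%:P * (('X * (A N)^`()) *+ 2 + A N)
   + (w ^+ 2)%:P * ('X * ('X * (A N)^`() + A N))) *+ 2.

Lemma deriv_A2D N : (A N ^+ 2 * Dpoly)^`() = A N * E N.
Proof.
have d1 : (1 : {poly R})^`() = 0 by rewrite -polyC1 derivC.
rewrite DpolyE /E !(derivM, derivD, derivXn, derivC, derivX, d1, derivMn); ring.
Qed.

(* Only a_0, ..., a_{m+1} enter the m-th coefficient, so the truncation at
   order N still satisfies the differential equation below order N. *)
Lemma coefE_small N m : (m < N)%N -> (E N)`_m = 0.
Proof.
move=> mN; have XAA : ('X * ('X * (A N)^`() + A N))`_m = m%:R * a m.-1.
  rewrite coefXM; case: m mN => [|m] mN /=; first by rewrite mul0r.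
  by rewrite coefD coef_Xderiv (coefA (ltnW (ltnW mN))) -mulrSr mulr_natl.
rewrite /E coefMn !(coefD, coefMn, coefCM) XAA coef_Xderiv coef_deriv (coefA mN) (coefA (ltnW mN)).
by rewrite -(mul0rn R 2) -(a_rec m); congr (_ *+ 2); ring.
Qed.

(* Hence A^2 D has no terms of positive degree up to N (dividing by n). *)
Lemma coef_A2D_pos N n : (0 < n <= N)%N -> (A N ^+ 2 * Dpoly)`_n = 0.
Proof.
case: n => [//|m] /= mN; apply: (@R_torsion_free _ m).
rewrite -coef_deriv deriv_A2D coefM big1 // => i _.
by rewrite coefE_small ?mulr0 // (leq_ltn_trans (leq_subr _ _)).
Qed.

Lemma coef_A2D_0 N : (A N ^+ 2 * Dpoly)`_0 = 1.
Proof.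
rewrite coef0M expr2 coef0M coefA // a0 !mul1r DpolyE.
by rewrite !coefD !coefCM coefX coefXn coef1 !mulr0 !addr0.
Qed.

Theorem inv_sqrt_of_diag_rec :
  let wx1 := ps_add (ps_mul (ps_C w) (ps_X _)) (ps_C 1) in
  is_inv_sqrt a (ps_sub (ps_mul wx1 wx1) (ps_mul (ps_C (4%:R * w ^+ 2)) (ps_X _))).
Proof.
move=> wx1; split=> //.
have -> : ps_sub (ps_mul wx1 wx1) (ps_mul (ps_C (4%:R * w ^+ 2)) (ps_X _)) = ps_of Dpoly.
  by rewrite /wx1 !ps_CE ps_XE !ps_mulE ps_addE ps_mulE ps_subE expr2 polyC1.
apply: functional_extensionality => n.
have aA i : (i <= n)%N -> a i = (A n)`_i by move=> ?; rewrite coefA.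
rewrite (@ps_mul_trunc _ _ _ (A n ^+ 2) Dpoly) //; last first.
  by move=> i ni; rewrite expr2; apply: ps_mul_trunc => j ji; rewrite aA // (leq_trans ji).
rewrite /ps_C; case: n {aA} => [|n]; first exact: coef_A2D_0.
by rewrite coef_A2D_pos //= leqnn.
Qed.
End DiagonalODE.

Lemma poly_torsion_free (R : numDomainType) (p : {poly R}) n : p *+ n.+1 = 0 -> p = 0.
Proof.
move=> pn0; apply/polyP => i; have /eqP := congr1 (fun r : {poly R} => r`_i) pn0.
by rewrite coefMn coef0 mulrn_eq0 => /eqP.
Qed.

Lemma Fpad_axis_l q : Fpad 0 q = 0. Proof. by []. Qed.
Lemma Fpad_axis_r p : Fpad p 0 = 0. Proof. by case: p. Qed.

Theorem mainTheorem6 :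
  let w : {poly int} := 1 + 'X in
  let S : ps {poly int} := fun n => Fpoly n n in
  let wx1 := ps_add (ps_mul (ps_C w) (ps_X _)) (ps_C 1) in
  let D := ps_sub (ps_mul wx1 wx1)
                  (ps_mul (ps_C (4%:R * w ^+ 2)) (ps_X _)) in
  is_inv_sqrt S D.
Proof.
move=> w S wx1 D.
apply: (@inv_sqrt_of_diag_rec _ (@poly_torsion_free _) w (fun n => Fpad n.+1 n.+1)).
- exact: (g11 Fpad_axis_l Fpad_axis_r Fpad_rec).
- exact: (g_diag_rec Fpad_axis_l Fpad_axis_r Fpad_rec).
Qed.
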